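(* Let $\mathcal{C}$ be an $(n,k)$ binary linear code with $n\ge2$, $k\ge1$, generator matrix $\mathbf{G}$ (any representation), information functions $\tilde e_g$, coefficients $a_t$, check-node EXIT function $I_E(p)$ and quantity $\Delta_{n-2}$ as defined in the context. Then: (i) $\frac{\mathrm{d}I_E}{\mathrm{d}p}\big|_{p=0}=\frac{(n-1)a_0-a_1}{n}$; (ii) $a_0=0$ if and only if $d_{\min}(\mathcal{C})\ge2$; (iii) if $d_{\min}(\mathcal{C})\ge 2$, then $a_1=2\Delta_{n-2}$ and hence $\frac{\mathrm{d}I_E}{\mathrm{d}p}\big|_{p=0}=-\frac{2}{n}\Delta_{n-2}$; moreover $a_1=\Delta_{n-2}=0$ if $d_{\min}(\mathcal{C})\ge3$, while $\Delta_{n-2}>0$ (so $a_1\neq0$) if $d_{\min}(\mathcal{C})=2$.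
   Context: For a $k\times n$ generator matrix $\mathbf{G}$ (rank $k$) of a binary $(n,k)$ code and $g\in\{0,\dots,n\}$, the un-normalized information function is $\tilde e_g=\sum_{S}\operatorname{rank}(\mathbf{G}_S)$, the sum over all $g$-element sets $S$ of column indices, $\mathbf{G}_S$ the $k\times g$ submatrix of those columns (rank of empty matrix is $0$). Set $a_t=(n-t)\tilde e_{n-t}-(t+1)\tilde e_{n-t-1}$ for $t=0,\dots,n-1$, and define the check-node EXIT function on the binary erasure channel $I_E(p)=1-\frac1n\sum_{t=0}^{n-1}a_t\,p^t(1-p)^{n-t-1}$, $p\in[0,1]$. Define $\Delta_{n-2}=\sum_{S}\big(k-\operatorname{rank}(\mathbf{G}_S)\big)$, the sum over all $(n-2)$-element sets $S$ of column indices. $d_{\min}$ denotes minimum Hamming distance. *)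

From HB Require Import structures.
From mathcomp Require Import all_boot all_order all_algebra all_fingroup all_field.
Set Implicit Arguments. Unset Strict Implicit. Unset Printing Implicit Defensive.
Import Order.TTheory GRing.Theory Num.Theory.
Local Open Scope ring_scope.

Section Code.
Variables (k n : nat).
Implicit Types (G : 'M['F_2]_(k, n)).

(* G_S : the k x |S| submatrix of G formed by the columns indexed by S
   (in increasing order of index). *)
Definition colsubset G (S : {set 'I_n}) : 'M['F_2]_(k, #|S|) :=
  colsub (fun j : 'I_#|S| => enum_val j) G.

(* un-normalized information function ~e_g *)
Definition info_fun G (g : nat) : nat :=
  (\sum_(S : {set 'I_n} | #|S| == g) \rank (colsubset G S))%N.

Definition acoef G (t : nat) : int :=
  ((n - t) * info_fun G (n - t))%:Z - ((t + 1) * info_fun G (n - t - 1))%:Z.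

Definition IE (R : realFieldType) G : {poly R} :=
  1 - (n%:R)^-1 *: \sum_(t < n) ((acoef G t)%:~R *: ('X^t * (1 - 'X) ^+ (n - t - 1))).

Definition Delta G : nat :=
  (\sum_(S : {set 'I_n} | #|S| == (n - 2)%N) (k - \rank (colsubset G S)))%N.

Definition wt (c : 'rV['F_2]_n) : nat := #|[set j | c 0 j != 0]|.

(* minimum Hamming distance = minimum weight of a nonzero codeword u G *)
Definition dmin G : nat :=
  \big[minn/n]_(u : 'rV['F_2]_k | u *m G != 0) wt (u *m G).

End Code.

From HB Require Import structures.
From mathcomp Require Import all_boot all_order all_algebra all_fingroup all_field.
Import Order.TTheory GRing.Theory Num.Theory.
Local Open Scope ring_scope.
Set Implicit Arguments. Unset Strict Implicit.

(* For a set S of columns, the rank defect k - rank(G_S) is the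
   dimension of the space of messages u whose codeword uG vanishes on S, i.e.
   whose support avoids S.  Summing over |S| = g gives the "defect sum" D_g,
   with ~e_g + D_g = k * C(n, g).  Using (t+1) C(n,t+1) = (n-t) C(n,t), every
   coefficient becomes a_t = (t+1) D_{n-t-1} - (n-t) D_{n-t}, a statement that
   does not involve the code at all beyond these defect sums.
   For a full-rank G, D_{n-m} = 0 exactly when no nonzero codeword has weight
   at most m; since all nonzero codewords already have weight >= 1, this
   gives D_n = 0, a_0 = D_{n-1}, and a_0 = 0 iff d_min >= 2.  Then
   a_1 = 2 D_{n-2} = 2 Delta, and Delta = 0 iff d_min >= 3.  Part (i) is a
   coefficient computation: only t = 0 and t = 1 contribute to the linear
   coefficient of sum_t a_t p^t (1-p)^(n-t-1). *)

Lemma exit_sum_coef1 (R : comNzRingType) (n : nat) (a : nat -> R) :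
  (2 <= n)%N ->
  (\sum_(t < n) (a t *: ('X^t * (1 - 'X) ^+ (n - t - 1))))`_1
    = a 1%N - (n - 1)%:R * a 0%N.
Proof.
case: n => [|[|n]] // _; rewrite coef_sum !big_ord_recl big1 => [|t _]; last first.
  by rewrite coefZ coefXnM /= mulr0.
have pow_coef0 m : ((1 - 'X : {poly R}) ^+ m)`_0 = 1.
  by rewrite -horner_coef0 !hornerE subr0 expr1n.
have pow_coef1 m : ((1 - 'X : {poly R}) ^+ m)`_1 = - m%:R.
  rewrite -[_`_1]mulr1n -coef_deriv -horner_coef0 deriv_exp.
  by rewrite !derivE hornerMn !hornerE subr0 expr1n mulr1 mulNrn.
rewrite !coefZ expr0 mul1r pow_coef1 expr1 coefXM pow_coef0 /=.
by rewrite subn0 addr0 mulr1 mulrN mulrC addrC.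
Qed.

Lemma IE_deriv0 (R : realFieldType) (k n : nat) (G : 'M['F_2]_(k, n)) :
  (2 <= n)%N ->
  (IE R G)^`().[0] = ((n - 1)%:R * (acoef G 0)%:~R - (acoef G 1)%:~R) / n%:R.
Proof.
move=> hn; rewrite horner_coef0 coef_deriv mulr1n /IE coefB coef1 coefZ /=.
rewrite (exit_sum_coef1 (fun t => (acoef G t)%:~R)) // sub0r.
by rewrite -mulrN opprB mulrC.
Qed.

Definition support (n : nat) (c : 'rV['F_2]_n) : {set 'I_n} :=
  [set j | c 0 j != 0].

Lemma wt_gt0 (n : nat) (c : 'rV['F_2]_n) : c != 0 -> (0 < wt c)%N.
Proof.
move=> hc; rewrite lt0n; apply: contra hc; rewrite cards_eq0 => /eqP h.
apply/eqP/matrixP => i j; rewrite (ord1 i) mxE.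
by apply/eqP; have := in_set0 j; rewrite -h inE => /negbFE.
Qed.

Lemma wt_le (n : nat) (c : 'rV['F_2]_n) : (wt c <= n)%N.
Proof. by rewrite /wt (leq_trans (max_card _)) ?card_ord. Qed.

Section DefectSums.
Variables (k n : nat) (G : 'M['F_2]_(k, n)).

Definition defect_sum (g : nat) : nat :=
  (\sum_(S : {set 'I_n} | #|S| == g) (k - \rank (colsubset G S)))%N.

Lemma Delta_defect_sum : Delta G = defect_sum (n - 2).
Proof. by []. Qed.

Lemma info_defect_sum (g : nat) : (info_fun G g + defect_sum g = k * 'C(n, g))%N.
Proof.
rewrite /info_fun /defect_sum -big_split /=.
rewrite (eq_bigr (fun _ => k)) => [|S _]; last by rewrite subnKC // rank_leq_row.
rewrite (eq_bigl (fun S => S \in [set S : {set 'I_n} | #|S| == g])) => [|S]; last first.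
  by rewrite inE.
by rewrite sum_nat_const card_draws card_ord mulnC.
Qed.

Lemma acoef_defect (t : nat) : (t < n)%N ->
  acoef G t = ((t + 1) * defect_sum (n - t - 1))%:Z - ((n - t) * defect_sum (n - t))%:Z.
Proof.
move=> ht.
have infoE g : (info_fun G g)%:Z = (k * 'C(n, g))%:Z - (defect_sum g)%:Z.
  by rewrite -info_defect_sum PoszD addrK.
have binE : ((n - t) * 'C(n, n - t) = (t + 1) * 'C(n, n - t - 1))%N.
  by rewrite bin_sub 1?ltnW // -subnDA addn1 bin_sub // mul_bin_left.
rewrite /acoef !PoszM !infoE !mulrBr -!PoszM mulnCA binE mulnCA.
by rewrite addrC opprB addrA subrK.
Qed.

Lemma colsubset_kernel (S : {set 'I_n}) (u : 'rV['F_2]_k) :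
  (u *m colsubset G S == 0) = (support (u *m G) \subset ~: S).
Proof.
rewrite /colsubset mulmx_colsub; apply/eqP/subsetP => [uGS0 j|avoid].
  rewrite !inE; apply: contraNN => jS.
  move/matrixP: uGS0 => /(_ 0 (enum_rank_in jS j)).
  by rewrite !mxE enum_rankK_in // => ->.
apply/matrixP => i j; rewrite (ord1 i) [RHS]mxE mxE.
have := avoid (enum_val j); rewrite !inE enum_valP /=.
by move=> in_supp; apply/eqP/negPn/negP => /in_supp.
Qed.

End DefectSums.

Section FullRank.
Variables (k n : nat) (G : 'M['F_2]_(k, n)).
Hypothesis rankG : \rank G = k.

Lemma codeword_eq0 (u : 'rV['F_2]_k) : (u *m G == 0) = (u == 0).
Proof.
have freeG : row_free G by rewrite /row_free rankG.
apply/eqP/eqP => [uG0|->]; last by rewrite mul0mx.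
by apply: (row_free_inj freeG); rewrite uG0 mul0mx.
Qed.

Lemma defect_gt0P (S : {set 'I_n}) :
  (0 < k - \rank (colsubset G S))%N <->
  exists2 u : 'rV['F_2]_k, u *m G != 0 & support (u *m G) \subset ~: S.
Proof.
rewrite subn_gt0 ltn_neqAle rank_leq_row andbT; split => [rank_lt | [u uG_nz avoid]].
  have notfree : ~~ row_free (colsubset G S) by rewrite /row_free.
  exists (nz_row (kermx (colsubset G S))).
    by rewrite codeword_eq0 nz_row_eq0 kermx_eq0.
  by rewrite -colsubset_kernel; apply/eqP/sub_kermxP/nz_row_sub.
apply/negP => /eqP full; have free : row_free (colsubset G S) by rewrite /row_free full.
move: uG_nz; rewrite codeword_eq0 => /eqP; apply.
by apply: (row_free_inj free); rewrite mul0mx; apply/eqP; rewrite colsubset_kernel.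
Qed.

Lemma defect_sum_eq0P (m : nat) : (m <= n)%N ->
  (forall u : 'rV['F_2]_k, u *m G != 0 -> (m <= wt (u *m G))%N) ->
  defect_sum G (n - m) = 0%N <->
  (forall u : 'rV['F_2]_k, u *m G != 0 -> (m < wt (u *m G))%N).
Proof.
move=> mn wt_ge; split => [D0 u uG_nz | wt_gt].
  rewrite ltn_neqAle wt_ge // andbT; apply/eqP => wt_m.
  have cardC : #|~: support (u *m G)| == (n - m)%N.
    by rewrite cardsCs setCK card_ord wt_m.
  move/eqP: D0; rewrite /defect_sum (bigD1 _ cardC) /= addn_eq0 => /andP [/eqP D_S _].
  have : (0 < k - \rank (colsubset G (~: support (u *m G))))%N.
    by apply/defect_gt0P; exists u; rewrite ?setCK.
  by rewrite D_S.
apply/eqP; rewrite sum_nat_eq0; apply/forall_inP => S /eqP cardS.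
rewrite eqn0Ngt; apply/negP => /defect_gt0P [u uG_nz avoid].
have := wt_gt u uG_nz; rewrite ltnNge => /negP; apply.
by rewrite (leq_trans (subset_leq_card avoid)) // cardsCs setCK card_ord cardS subKn.
Qed.

Hypothesis k_gt0 : (0 < k)%N.

Lemma nonzero_codeword : exists u : 'rV['F_2]_k, u *m G != 0.
Proof.
exists (const_mx 1); rewrite codeword_eq0.
apply/negP => /eqP /matrixP /(_ 0 (Ordinal k_gt0)); rewrite !mxE.
by apply/eqP; exact: oner_neq0.
Qed.

(* m <= dmin iff every nonzero codeword has weight at least m; the default
   value n of the minimum never matters since a nonzero codeword exists. *)
Lemma dmin_geP (m : nat) :
  (m <= dmin G)%N <-> (forall u : 'rV['F_2]_k, u *m G != 0 -> (m <= wt (u *m G))%N).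
Proof.
split => [m_le u uG_nz | wt_ge].
  apply: (leq_trans m_le); rewrite /dmin; have := mem_index_enum u.
  elim: (index_enum _) => // v r IH; rewrite inE big_cons => /predU1P [<-|u_r].
    by rewrite uG_nz geq_minl.
  by case: ifP => _; rewrite ?(leq_trans (geq_minr _ _)) ?IH.
have [u1 u1G_nz] := nonzero_codeword.
rewrite /dmin; elim/big_ind: _ => [|x y mx my|u uG_nz]; last exact: wt_ge.
  exact: leq_trans (wt_ge _ u1G_nz) (wt_le _).
by rewrite leq_min mx my.
Qed.

Lemma defect_sum_eq0_dmin (m : nat) : (m <= dmin G)%N ->
  defect_sum G (n - m) = 0%N <-> (m < dmin G)%N.
Proof.
move=> m_le; have wt_ge := iffLR (dmin_geP m) m_le.
have [u1 u1G_nz] := nonzero_codeword.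
have mn : (m <= n)%N := leq_trans (wt_ge _ u1G_nz) (wt_le _).
exact: iff_trans (defect_sum_eq0P mn wt_ge) (iff_sym (dmin_geP m.+1)).
Qed.

End FullRank.

Theorem mainTheorem4 (R : realFieldType) (n k : nat) (G : 'M['F_2]_(k, n))
  (hn : (2 <= n)%N) (hk : (1 <= k)%N) (hrank : \rank G = k) :
  [/\ (IE R G)^`().[0] =
        ((n - 1)%:R * (acoef G 0)%:~R - (acoef G 1)%:~R) / n%:R,
      acoef G 0 = 0 <-> (2 <= dmin G)%N
    & (2 <= dmin G)%N ->
      [/\ acoef G 1 = 2 * (Delta G)%:Z,
          (IE R G)^`().[0] = - (2%:R / n%:R) * (Delta G)%:R,
          (3 <= dmin G)%N -> acoef G 1 = 0 /\ Delta G = 0%N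
        & dmin G = 2%N -> (0 < Delta G)%N]].
Proof.
have eq0_dmin m := defect_sum_eq0_dmin hrank hk (m := m).
have dmin_gt0 : (0 < dmin G)%N.
  by apply/(dmin_geP hrank hk) => u /wt_gt0.
have D_n : defect_sum G n = 0%N.
  by have := iffRL (eq0_dmin 0%N (leq0n _)) dmin_gt0; rewrite subn0.
have a0E : acoef G 0 = (defect_sum G (n - 1))%:Z.
  by rewrite acoef_defect ?(leq_trans _ hn) // subn0 D_n muln0 subr0 mul1n.
have a0_eq0 : acoef G 0 = 0 <-> (2 <= dmin G)%N.
  rewrite a0E; apply: iff_trans (eq0_dmin 1%N dmin_gt0).
  by split => [[]|->].
split; [exact: IE_deriv0 | exact: a0_eq0 | move=> dmin_ge2].
have D_n1 : defect_sum G (n - 1) = 0%N by apply/eq0_dmin.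
have a1E : acoef G 1 = 2 * (Delta G)%:Z.
  by rewrite acoef_defect // D_n1 muln0 subr0 -subnDA Delta_defect_sum PoszM.
have Delta_eq0 : Delta G = 0%N <-> (2 < dmin G)%N.
  by rewrite Delta_defect_sum; exact: eq0_dmin.
split => // [| dmin_ge3 | dmin_eq2].
- by rewrite IE_deriv0 // a0E D_n1 a1E mulr0 sub0r intrM !mulNr mulrAC.
- by have D0 := iffRL Delta_eq0 dmin_ge3; rewrite a1E D0.
- by rewrite lt0n; apply/negP => /eqP /Delta_eq0; rewrite dmin_eq2.
Qed.
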